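(* Let $\Gamma$ be a weighted digraph with vertex set $\{1,\dots,n\}$, $n>1$, without loops and with strictly positive arc weights, let $L$ be its Laplacian matrix, $d$ its in-forest dimension, and $Q_k$ its matrices of in-forests with $k$ arcs. Then for every $\lambda\in\mathbb{C}$, $$\operatorname{adj}(\lambda I+L)=\sum_{k=0}^{n-d} Q_k\,\lambda^{\,n-k-1},$$ where $\lambda^0:=1$ (also for $\lambda=0$) and $\operatorname{adj}A$ denotes the transposed matrix of cofactors of $A$.
   Context: $W=(w_{ij})$ is the matrix of arc weights: $w_{ij}>0$ if there is an arc from $i$ to $j$, and $w_{ij}=0$ otherwise. The Laplacian matrix $L=(\ell_{ij})$ has $\ell_{ij}=-w_{ij}$ for $j\neq i$ and $\ell_{ii}=\sum_{k\neq i}w_{ik}$. The weight of a subgraph is the product of the weights of its arcs (1 if it has no arcs); the weight of a set of subgraphs is the sum of their weights (0 for the empty set). A converging tree is a weakly connected digraph in which one vertex (the root) has outdegree 0 and all others have outdegree 1. An in-forest of $\Gamma$ is a spanning subgraph of $\Gamma$ all of whose weak components are converging trees. The in-forest dimension $d$ is the minimum number of trees in an in-forest of $\Gamma$; the maximum number of arcs of an in-forest is $n-d$. For $k\ge0$, $Q_k=(q^k_{ij})$ is the $n\times n$ matrix where $q^k_{ij}$ is the total weight of the in-forests of $\Gamma$ with $k$ arcs in which $i$ belongs to a tree whose root is $j$; thus $Q_0=I$ and $Q_k=0$ for $k>n-d$. *)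

From HB Require Import structures.
From mathcomp Require Import all_boot all_order all_algebra.
Set Implicit Arguments. Unset Strict Implicit. Unset Printing Implicit Defensive.
Import Order.TTheory GRing.Theory Num.Theory.
Local Open Scope ring_scope.

Section Forests.
Variables (C : numClosedFieldType) (n : nat) (W : 'M[C]_n).

Definition is_arc (a : 'I_n * 'I_n) : bool := 0 < W a.1 a.2.

(* a (spanning) subgraph is given by its set of arcs *)
Definition subgraph (F : {set 'I_n * 'I_n}) : bool := [forall a in F, is_arc a].

Definition outdeg (F : {set 'I_n * 'I_n}) (i : 'I_n) : nat :=
  #|[set j | (i, j) \in F]|.

Definition wadj (F : {set 'I_n * 'I_n}) : rel 'I_n :=
  fun x y => ((x, y) \in F) || ((y, x) \in F).

Definition wcomp (F : {set 'I_n * 'I_n}) (v : 'I_n) : {set 'I_n} :=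
  [set u | connect (wadj F) v u].

(* the weak component of v (weakly connected by construction) is a converging
   tree: exactly one vertex has outdegree 0, all others have outdegree 1 *)
Definition comp_converging_tree (F : {set 'I_n * 'I_n}) (v : 'I_n) : bool :=
  (#|[set u in wcomp F v | outdeg F u == 0%N]| == 1%N) &&
  [forall u in wcomp F v, (outdeg F u == 0%N) || (outdeg F u == 1%N)].

Definition in_forest (F : {set 'I_n * 'I_n}) : bool :=
  subgraph F && [forall v, comp_converging_tree F v].

(* number of trees = number of weak components *)
Definition ntrees (F : {set 'I_n * 'I_n}) : nat := #|[set wcomp F v | v : 'I_n]|.

(* in-forest dimension: minimum number of trees of an in-forest
   (the empty arc set is always an in-forest; default value n) *)
Definition inforest_dim : nat :=
  \big[minn/n]_(F : {set 'I_n * 'I_n} | in_forest F) ntrees F.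

Definition sg_weight (F : {set 'I_n * 'I_n}) : C := \prod_(a in F) W a.1 a.2.

Definition rooted_at (F : {set 'I_n * 'I_n}) (i j : 'I_n) : bool :=
  (j \in wcomp F i) && (outdeg F j == 0%N).

Definition Qmat (k : nat) : 'M[C]_n :=
  \matrix_(i, j) \sum_(F : {set 'I_n * 'I_n} |
                        in_forest F && (#|F| == k) && rooted_at F i j) sg_weight F.

Definition laplacian : 'M[C]_n :=
  \matrix_(i, j) if i == j then \sum_(k | k != i) W i k else - W i j.

End Forests.

(* Replacing row j of lambda I + L by the unit row e_i turns the (j, i)
   cofactor into a determinant whose row r <> j is a sum over the choices "no
   successor" (contributing lambda e_r) and "arc r -> k" (contributing
   w_rk (e_r - e_k)).  Multilinear expansion gives a sum over partial successor
   functions f with f j undefined, i.e. over arc sets of outdegree <= 1 in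
   which j is a sink, each weighted by lambda^(#sinks - 1) times its arc
   weights.  The remaining 0/+-1 determinant vanishes when f has a cycle
   (the rows along the cycle sum to zero); otherwise row operations along the
   walk from i show that it is 1 if that walk ends in j and 0 if not.  Hence
   exactly the in-forests in which i lies in the tree rooted at j survive;
   grouping them by their number of arcs, which is at most n - d, yields the
   coefficients Q_k. *)

From HB Require Import structures.
From mathcomp Require Import all_boot all_order all_algebra perm zify.
Set Implicit Arguments. Unset Strict Implicit. Unset Printing Implicit Defensive.
Import Order.TTheory GRing.Theory Num.Theory.
Local Open Scope ring_scope.

Section FunctionalGraphs.
Variable n : nat.
Implicit Types (f : {ffun 'I_n -> option 'I_n}) (F : {set 'I_n * 'I_n}).

Definition arcs f : {set 'I_n * 'I_n} := [set a | f a.1 == Some a.2].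

Definition walk f t v : option 'I_n := iter t (obind f) (Some v).

Definition acyclic f := forall v, exists t, walk f t v = None.

Definition on_cycle f x := exists2 m, (0 < m)%N & walk f m x = Some x.

Lemma in_arcs f r k : ((r, k) \in arcs f) = (f r == Some k).
Proof. by rewrite inE. Qed.

Lemma outdeg_arcs f u : outdeg (arcs f) u = (f u != None).
Proof.
rewrite /outdeg; case E: (f u) => [k|] /=; last first.
  by apply/eqP; rewrite cards_eq0; apply/eqP/setP => x; rewrite !inE E.
rewrite -(cards1 k); apply: eq_card => x.
by rewrite !inE E; apply/eqP/eqP => [[->]|->].
Qed.

Lemma iter_obind_None f t : iter t (obind f) None = None.
Proof. by elim: t => //= t ->. Qed.

Lemma walkS f t v : walk f t.+1 v = iter t (obind f) (f v).
Proof. by rewrite /walk iterSr. Qed.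

Lemma walkD f s t v : walk f (s + t) v = iter s (obind f) (walk f t v).
Proof. by rewrite /walk iterD. Qed.

Lemma connect_wadjC F x y : connect (wadj F) x y = connect (wadj F) y x.
Proof. by apply: sym_connect_sym => a b; apply: orbC. Qed.

Lemma eq_wcomp F u v : connect (wadj F) u v -> wcomp F u = wcomp F v.
Proof.
move=> cuv; apply/setP => x; rewrite !inE; apply/idP/idP; last exact: connect_trans.
by apply: connect_trans; rewrite connect_wadjC.
Qed.

Lemma walk_connect f t v u : walk f t v = Some u -> connect (wadj (arcs f)) v u.
Proof.
elim: t v => [|t IH] v; first by case=> ->.
rewrite walkS; case E: (f v) => [w|]; last by rewrite iter_obind_None.
move=> /IH; apply: connect_trans; apply: connect1.
by rewrite /wadj in_arcs E eqxx.
Qed.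

(* The targets [o] with [obind f o = None] are [None] and the roots: reaching
   one of them is a property of the whole weak component. *)
Lemma walk_reaches_connect f o a b : obind f o = None ->
  connect (wadj (arcs f)) a b ->
  (exists t, walk f t a = o) -> exists t, walk f t b = o.
Proof.
move=> fo /connectP [p]; elim: p a => [|c p IH] a /=; first by move=> _ ->.
case/andP=> ac pc eb [t Ht]; apply: (IH c pc eb).
case/orP: ac => /[!in_arcs] /eqP fa; last by exists t.+1; rewrite walkS fa.
case: t Ht => [ao|t]; first by rewrite -ao /= fa in fo.
by rewrite walkS fa => Ht; exists t.
Qed.

Lemma wcomp_rootP f j i : f j = None ->
  (j \in wcomp (arcs f) i) <-> exists t, walk f t i = Some j.
Proof.
move=> fj; rewrite inE; split; last by case=> t /walk_connect.
rewrite connect_wadjC => cji.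
by apply: walk_reaches_connect cji _; [rewrite /= fj | exists 0%N].
Qed.

Lemma walk_to_root f t v : walk f t v = None ->
  exists t' r, walk f t' v = Some r /\ f r = None.
Proof.
elim: t v => [|t IH] v //; rewrite walkS.
case fv: (f v) => [w|] wt; last by exists 0%N, v.
by have [t' [r [wr fr]]] := IH w wt; exists t'.+1, r; rewrite walkS fv.
Qed.

Lemma acyclic_converging_tree f v : acyclic f -> comp_converging_tree (arcs f) v.
Proof.
move=> acf; apply/andP; split; last first.
  by apply/forall_inP => u _; rewrite outdeg_arcs; case: (f u).
have [t Ht] := acf v; have [t' [r [vr fr]]] := walk_to_root Ht.
apply/eqP; rewrite -(cards1 r); apply: eq_card => u.
rewrite !inE outdeg_arcs; apply/idP/idP; last first.
  by move/eqP->; rewrite fr eqxx andbT; apply: walk_connect vr.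
case/andP=> cvu; rewrite eqb0 negbK => /eqP fu.
have [[|s]] := walk_reaches_connect (o := Some r) fr cvu (ex_intro _ t' vr).
  by case=> ->.
by rewrite walkS fu iter_obind_None.
Qed.

Lemma on_cycle_walk_neq_None f x : on_cycle f x -> forall t, walk f t x != None.
Proof.
case=> m m_gt0 xm t; have xkm k : walk f (k * m) x = Some x.
  by elim: k => // k IH; rewrite mulSn walkD IH.
apply/eqP => xt; have := xkm t.
by rewrite -(subnK (leq_pmulr t m_gt0)) walkD xt iter_obind_None.
Qed.

Lemma cycle_not_converging_tree f x : on_cycle f x ->
  ~~ comp_converging_tree (arcs f) x.
Proof.
move=> cx; apply/negP => /andP [/eqP roots1 _].
suff : [set u in wcomp (arcs f) x | outdeg (arcs f) u == 0%N] = set0.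
  by move=> E; rewrite E cards0 in roots1.
apply/setP => u; rewrite !inE outdeg_arcs eqb0 negbK.
apply/negP => /andP [cxu /eqP fu].
rewrite connect_wadjC in cxu.
have u1 : walk f 1 u = None by rewrite walkS fu.
have [t xt] := walk_reaches_connect (o := None) erefl cxu (ex_intro _ 1%N u1).
by move: (on_cycle_walk_neq_None cx t); rewrite xt.
Qed.

Lemma walk_None_or_cycle f v : walk f n v = None \/ exists x, on_cycle f x.
Proof.
have /trajectP [k lt_km] := looping_order (obind f) (Some v).
set m := order _ _ => loop_vk; have {}loop_vk : walk f m v = walk f k v by [].
have le_kn : (k <= n)%N.
  have := max_card (mem (fconnect (obind f) (Some v))).
  by rewrite card_option card_ord -ltnS; apply: leq_trans lt_km.
case vk: (walk f k v) loop_vk => [x|] loop_vk.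
  right; exists x; exists (m - k)%N; first by rewrite subn_gt0.
  rewrite -loop_vk -[walk f _ x]/(iter (m - k) (obind f) (Some x)) -vk.
  by rewrite -walkD subnK // ltnW.
by left; rewrite -[in walk f n v](subnK le_kn) walkD vk iter_obind_None.
Qed.

Lemma acyclic_or_cycle f : acyclic f \/ exists x, on_cycle f x.
Proof.
have [walks_end|] := boolP [forall v, walk f n v == None].
  by left => v; exists n; apply/eqP/(forallP walks_end).
by case/forallPn => v /eqP vn; case: (walk_None_or_cycle f v) => //; right.
Qed.

Lemma acyclic_drop_arc f r :
  acyclic f -> acyclic [ffun x => if x == r then None else f x].
Proof.
set f' := [ffun _ => _] => acf v; have [t vt] := acf v; exists t.
suff drop_None o : iter t (obind f) o = None -> iter t (obind f') o = None.
  exact: drop_None.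
elim: t o {vt} => // t IH o; rewrite !iterSr => /IH.
case: o => [x|] //=; rewrite ffunE; case: (x == r) => // _.
exact: iter_obind_None.
Qed.

Lemma arc_to_root f t v : walk f t v = None -> f v != None ->
  exists r k, f r = Some k /\ f k = None.
Proof.
elim: t v => [|t IH] v //; rewrite walkS.
case fv: (f v) => [w|] // wt _.
case fw: (f w) => [w'|]; last by exists v, w.
by apply: (IH w wt); rewrite fw.
Qed.

Lemma arcsE f : arcs f = [set (r, odflt r (f r)) | r in [set r | f r != None]].
Proof.
apply/setP => [[r k]]; rewrite in_arcs; apply/eqP/imsetP.
  by move=> E; exists r; rewrite ?inE E.
by case=> r' Hr' [-> ->]; rewrite inE in Hr'; case: (f r') Hr'.
Qed.

Lemma card_arcs f : #|arcs f| = #|[set r | f r != None]|.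
Proof. by rewrite arcsE card_imset // => x y []. Qed.

Lemma arcs_inj : injective arcs.
Proof.
move=> f1 f2 E; apply/ffunP => r.
have Ek k : (f1 r == Some k) = (f2 r == Some k) by rewrite -!in_arcs E.
case E1: (f1 r) => [k|]; first by apply/esym/eqP; rewrite -Ek E1.
by case E2: (f2 r) => [k|] //; have := Ek k; rewrite E1 E2 eqxx.
Qed.

Definition succ_of F : {ffun 'I_n -> option 'I_n} :=
  [ffun r => [pick k | (r, k) \in F]].

Lemma succ_ofK F : (forall r, outdeg F r <= 1)%N -> arcs (succ_of F) = F.
Proof.
move=> out_le1; apply/setP => [[r k]]; rewrite in_arcs ffunE.
case: pickP => [k' rk'|/(_ k) -> //]; apply/eqP/idP => [[<-] //|rk].
have /card_le1P /(_ k') := out_le1 r.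
by rewrite inE rk' => /(_ isT k); rewrite inE rk => /esym/eqP ->.
Qed.

End FunctionalGraphs.

Section InForests.
Variables (C : numClosedFieldType) (n : nat) (W : 'M[C]_n).
Implicit Types (F : {set 'I_n * 'I_n}).

Definition roots F := [set r | outdeg F r == 0%N].

Lemma in_forest_outdeg F r : in_forest W F -> (outdeg F r <= 1)%N.
Proof.
case/andP=> _ /forallP /(_ r) /andP [_ /forall_inP /(_ r)].
by rewrite inE connect0 => /(_ isT) /orP [] /eqP ->.
Qed.

Lemma inforest_dim_le_ntrees F : in_forest W F -> (inforest_dim W <= ntrees F)%N.
Proof. exact: (@bigmin_le_cond _ nat _ n F (in_forest W)). Qed.

Lemma ntrees_le_roots F : in_forest W F -> (ntrees F <= #|roots F|)%N.
Proof.
move=> /andP [_ /forallP trees]; apply: leq_trans (leq_imset_card (wcomp F) _).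
apply/subset_leq_card/subsetP => _ /imsetP [v _ ->].
have /andP [/eqP root1 _] := trees v.
have /set0Pn [r] : [set u in wcomp F v | outdeg F u == 0%N] != set0.
  by apply: contra_eqN root1 => /eqP ->; rewrite cards0.
rewrite !inE => /andP [vr r0]; apply/imsetP; exists r; first by rewrite inE.
exact: eq_wcomp.
Qed.

Lemma card_roots F : in_forest W F -> (#|F| + #|roots F| = n)%N.
Proof.
move=> FW; have FE := succ_ofK (fun r => in_forest_outdeg r FW).
rewrite -[in RHS](card_ord n) -(cardsC [set r | succ_of F r != None]).
rewrite -card_arcs FE; congr (_ + _); apply: eq_card => r.
by rewrite !inE -[F in outdeg F]FE outdeg_arcs; case: (_ != None).
Qed.

Lemma card_in_forest F : in_forest W F -> (#|F| <= n - inforest_dim W)%N.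
Proof.
move=> FW; have := card_roots FW; have := ntrees_le_roots FW.
have := inforest_dim_le_ntrees FW; lia.
Qed.

End InForests.

Lemma sum_option (V : nmodType) (T : finType) (F : option T -> V) :
  \sum_(o : option T) F o = F None + \sum_(k : T) F (Some k).
Proof.
rewrite (bigD1 None) //=; congr (_ + _).
rewrite (reindex_omap Some id) /=; last by case.
by apply: eq_bigl => k; rewrite eqxx.
Qed.

Section Determinants.
Variables (R : comPzRingType) (n : nat).
Implicit Types (A : 'M[R]_n) (f : {ffun 'I_n -> option 'I_n}).

Lemma det_add_scaled_row A r0 r1 a : r0 != r1 ->
  \det (\matrix_(r, c) if r == r0 then A r0 c + a * A r1 c else A r c) = \det A.
Proof.
move=> r01; set A' := \matrix_(r, c) _.
pose B := \matrix_(r, c) if r == r0 then A r1 c else A r c.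
have row'_r0 (M : 'M[R]_n) : (forall r c, r != r0 -> M r c = A r c) ->
    row' r0 M = row' r0 A'.
  move=> MA; apply/matrixP => x y.
  have r0x : lift r0 x != r0 by rewrite eq_sym neq_lift.
  by rewrite !mxE (negbTE r0x) MA.
rewrite (@determinant_multilinear _ _ A' A B r0 1 a).
- rewrite (@determinant_alternate _ _ B r0 r1) ?mulr0 ?addr0 ?mul1r //.
  by move=> c; rewrite !mxE eqxx eq_sym (negbTE r01).
- by apply/rowP => c; rewrite !mxE eqxx mul1r.
- exact: row'_r0.
- by apply: row'_r0 => r c /negbTE r0F; rewrite mxE r0F.
Qed.

Lemma det_sum_rows (J : finType) (w : 'I_n -> J -> R) (v : 'I_n -> J -> 'I_n -> R) :
  \det (\matrix_(r, c) \sum_(o : J) w r o * v r o c) =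
  \sum_(g : {ffun 'I_n -> J}) (\prod_r w r (g r)) * \det (\matrix_(r, c) v r (g r) c).
Proof.
rewrite /determinant.
transitivity (\sum_(s : 'S_n) \sum_(g : {ffun 'I_n -> J})
   (-1) ^+ s * ((\prod_r w r (g r)) * \prod_r v r (g r) (s r))).
  apply: eq_bigr => s _.
  rewrite (eq_bigr (fun r => \sum_o w r o * v r o (s r))) => [|r _]; last first.
    by rewrite mxE.
  by rewrite bigA_distr_bigA mulr_sumr; apply: eq_bigr => g _; rewrite big_split.
rewrite exchange_big; apply: eq_bigr => g _; rewrite mulr_sumr.
apply: eq_bigr => s _; rewrite mulrCA; congr (_ * (_ * _)).
by apply: eq_bigr => r _; rewrite mxE.
Qed.

Definition unitrow_mx j i A : 'M[R]_n :=
  \matrix_(r, c) if r == j then (c == i)%:R else A r c.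

Lemma cofactor_unitrow A j i : cofactor A j i = \det (unitrow_mx j i A).
Proof.
rewrite expand_cofactor /determinant big_mkcond /=; apply: eq_bigr => s _.
rewrite [in RHS](bigD1 j) //= mxE eqxx.
case: eqP => [sji|_]; last by rewrite mul0r mulr0.
rewrite mul1r; congr (_ * _); apply: eq_big => [k|k kj]; first by rewrite eq_sym.
by rewrite mxE eq_sym (negbTE kj).
Qed.

Definition forest_mx f : 'M[R]_n :=
  \matrix_(r, c) ((r == c)%:R - (f r == Some c)%:R).

Lemma det_forest_mx f : acyclic f -> \det (forest_mx f) = 1.
Proof.
have [m] := ubnP #|arcs f|; elim: m f => // m IH f; rewrite ltnS => size_f acf.
have [/existsP [v fv] | /existsPn no_arcs] := boolP [exists v, f v != None]; last first.
  rewrite -(det1 R n); congr (\det _); apply/matrixP => r c.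
  by move/negbNE/eqP: (no_arcs r); rewrite !mxE => ->; rewrite subr0.
have [t vt] := acf v; have [r [k [frk fk]]] := arc_to_root vt fv.
have rk : r != k by apply: contraPneq frk => ->; rewrite fk.
set f' := [ffun x => if x == r then None else f x].
have -> : forest_mx f = \matrix_(x, c) if x == r
    then forest_mx f' r c + (-1) * forest_mx f' k c else forest_mx f' x c.
  apply/matrixP => x c; rewrite !mxE !ffunE eqxx.
  have [->|//] := eqVneq x r.
  by rewrite frk fk if_same !subr0 mulN1r.
rewrite det_add_scaled_row // IH //; last exact: acyclic_drop_arc.
apply: leq_trans size_f; rewrite !card_arcs (cardsD1 r [set x | f x != None]) inE frk.
rewrite add1n ltnS; apply/subset_leq_card/subsetP => x.
by rewrite !inE ffunE; case: (x == r).
Qed.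

Lemma det_unitrow_forest_mx f i j : f j = None -> acyclic f ->
  \det (unitrow_mx j i (forest_mx f)) = (j \in wcomp (arcs f) i)%:R.
Proof.
move=> fj acf; have [t] := acf i; elim: t i => [|t IH] i //; rewrite walkS.
have [-> _|ij] := eqVneq i j.
  rewrite inE connect0 -(det_forest_mx acf); congr (\det _).
  apply/matrixP => r c; rewrite !mxE; case: eqP => // rj; subst r.
  by rewrite fj subr0 eq_sym.
case fi: (f i) => [k|] kt; last first.
  have /negbTE -> : j \notin wcomp (arcs f) i.
    apply/negP => /(wcomp_rootP i fj) [[[ij']|s]]; first by rewrite ij' eqxx in ij.
    by rewrite walkS fi iter_obind_None.
  apply: (determinant_alternate ij) => c.
  by rewrite !mxE (negbTE ij) eqxx fi subr0 eq_sym.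
have ik : connect (wadj (arcs f)) i k by apply: connect1; rewrite /wadj in_arcs fi eqxx.
rewrite (eq_wcomp ik) -(IH k kt) -[RHS](@det_add_scaled_row _ j i 1); last first.
  by rewrite eq_sym.
congr (\det _); apply/matrixP => r c; rewrite !mxE.
case: eqP => // rj; subst r; rewrite eqxx (negbTE ij) fi mul1r.
by rewrite -[Some k == _]/(k == c) [i == c]eq_sym [k == c]eq_sym addrC subrK.
Qed.

End Determinants.

Lemma det_unitrow_forest_mx_cycle (K : numFieldType) n
    (f : {ffun 'I_n -> option 'I_n}) i j x :
  f j = None -> on_cycle f x -> \det (unitrow_mx j i (forest_mx K f)) = 0.
Proof.
move=> fj cx; have [m m_gt0 xm] := cx.
pose y t := odflt x (walk f t x).
have walk_y t : walk f t x = Some (y t).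
  by rewrite /y; move: (on_cycle_walk_neq_None cx t); case: (walk f t x).
have f_y t : f (y t) = Some (y t.+1).
  by rewrite -walk_y /walk iterS -/(walk f t x) walk_y.
have y_neq_j t : y t != j by apply: contraPneq (f_y t) => ->; rewrite fj.
pose v := \sum_(t < m) (delta_mx 0 (y t) : 'rV[K]_n).
apply/eqP/det0P; exists v.
  apply/eqP => /rowP /(_ (y 0%N)) /eqP; rewrite summxE mxE.
  under eq_bigr do rewrite mxE eqxx /=.
  by rewrite -natr_sum pnatr_eq0 (bigD1 (Ordinal m_gt0)) //= eqxx add1n.
rewrite mulmx_suml.
have -> : \sum_(t < m) delta_mx 0 (y t) *m unitrow_mx j i (forest_mx K f) =
          - \sum_(0 <= t < m) (delta_mx 0 (y t.+1) - delta_mx 0 (y t) : 'rV[K]_n).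
  rewrite big_mkord -sumrN; apply: eq_bigr => t _; rewrite -rowE opprB.
  apply/rowP => c; rewrite !mxE (negbTE (y_neq_j t)) f_y.
  by rewrite -[Some _ == _]/(y t.+1 == c) !(eq_sym c).
have y_m : y m = y 0%N by apply: Some_inj; rewrite -walk_y xm.
by rewrite telescope_sumr // y_m subrr oppr0.
Qed.

Section ForestExpansion.
Variables (C : numClosedFieldType) (n : nat) (W : 'M[C]_n).
Hypothesis W_loopless : forall i, W i i = 0.
Hypothesis W_ge0 : forall i j, W i j = 0 \/ 0 < W i j.
Variables (lambda : C) (i j : 'I_n).
Implicit Types (f : {ffun 'I_n -> option 'I_n}).

Definition row_weight r (o : option 'I_n) : C :=
  if r == j then (o == None)%:R else if o is Some k then W r k else lambda.

Definition row_vector r (o : option 'I_n) c : C :=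
  if r == j then (c == i)%:R else (r == c)%:R - (o == Some c)%:R.

Lemma unitrow_laplacian_sum :
  unitrow_mx j i (lambda%:M + laplacian W) =
  \matrix_(r, c) \sum_o row_weight r o * row_vector r o c.
Proof.
apply/matrixP => r c; rewrite !mxE sum_option /row_weight /row_vector.
have [rj|rj] := eqVneq r j.
  by subst r; rewrite eqxx mul1r big1 ?addr0 // => k _; rewrite mul0r.
rewrite [None == _]/= mulr0n subr0.
have row_sum : \sum_k W r k = \sum_(k | k != r) W r k.
  by rewrite (bigD1 r) //= W_loopless add0r.
have arc_sum : \sum_k W r k * ((r == c)%:R - (Some k == Some c)%:R) =
               (r == c)%:R * \sum_k W r k - W r c.
  transitivity (\sum_k ((r == c)%:R * W r k - (k == c)%:R * W r k)).
    by apply: eq_bigr => k _; rewrite mulrBr !(mulrC (W r k)).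
  rewrite sumrB -mulr_sumr; congr (_ - _).
  rewrite (bigD1 c) //= eqxx mul1r big1 ?addr0 // => k /negbTE ->.
  by rewrite mul0r.
rewrite arc_sum -row_sum; case: eqVneq => [<-|_].
  by rewrite W_loopless subr0 mulr1n mulr1 mul1r.
by rewrite mulr0n mulr0 mul0r !add0r.
Qed.

Lemma prod_row_weight f : f j = None ->
  \prod_r row_weight r (f r) = lambda ^+ (n - #|arcs f| - 1) * sg_weight W (arcs f).
Proof.
move=> fj; rewrite (bigD1 j) //= {1}/row_weight eqxx fj mul1r.
rewrite (bigID (fun r => f r == None)) /=; congr (_ * _).
  rewrite (eq_bigr (fun _ => lambda)) => [|r /andP [/negbTE rj /eqP fr]]; last first.
    by rewrite /row_weight rj fr.
  rewrite prodr_const card_arcs; congr (_ ^+ _).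
  have := cardsC [set r | f r != None]; rewrite card_ord.
  rewrite (cardsD1 j (~: _)) !inE fj /=; set m := #|_ :\ j|.
  suff -> : #|[pred r | (r != j) && (f r == None)]| = m by lia.
  by apply: eq_card => r; rewrite !inE negbK.
rewrite /sg_weight arcsE big_imset /= => [|x y _ _ [] //].
apply: eq_big => r; first by rewrite inE; case: eqVneq => // ->; rewrite fj.
by case/andP => /negbTE rj; rewrite /row_weight rj; case: (f r).
Qed.

Lemma expansion_term f :
  (\prod_r row_weight r (f r)) * \det (\matrix_(r, c) row_vector r (f r) c) =
  if (f j == None) && in_forest W (arcs f) && rooted_at (arcs f) i j
  then lambda ^+ (n - #|arcs f| - 1) * sg_weight W (arcs f) else 0.
Proof.
have -> : \matrix_(r, c) row_vector r (f r) c = unitrow_mx j i (forest_mx C f).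
  by apply/matrixP => r c; rewrite !mxE.
have [fj|fj] /= := eqVneq (f j) None; last first.
  by rewrite (bigD1 j) //= {1}/row_weight eqxx (negbTE fj) !mul0r.
have [sub|nsub] := boolP (subgraph W (arcs f)); last first.
  rewrite /in_forest (negbTE nsub) /=.
  case/forall_inPn: nsub => -[r k]; rewrite in_arcs /is_arc => /eqP frk /= Wrk.
  have rj : r != j by apply: contraPneq frk => ->; rewrite fj.
  have W0 : W r k = 0 by case: (W_ge0 r k) Wrk => // ->.
  by rewrite (bigD1 r) //= {1}/row_weight (negbTE rj) frk W0 !mul0r.
rewrite prod_row_weight // /in_forest sub /=.
have [acf | [x cx]] := acyclic_or_cycle f.
  rewrite det_unitrow_forest_mx // /rooted_at outdeg_arcs fj /= andbT.
  have -> : [forall v, comp_converging_tree (arcs f) v].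
    by apply/forallP => v; apply: acyclic_converging_tree.
  by case: (j \in _); rewrite ?mulr1 ?mulr0.
rewrite (det_unitrow_forest_mx_cycle _ _ fj cx) mulr0.
have /negbTE -> // : ~~ [forall v, comp_converging_tree (arcs f) v].
by apply/forallPn; exists x; apply: cycle_not_converging_tree.
Qed.

Lemma cofactor_shifted_laplacian :
  cofactor (lambda%:M + laplacian W) j i =
  \sum_(F | in_forest W F && rooted_at F i j) lambda ^+ (n - #|F| - 1) * sg_weight W F.
Proof.
rewrite cofactor_unitrow unitrow_laplacian_sum det_sum_rows.
under eq_bigr do rewrite expansion_term.
pose G (F : {set 'I_n * 'I_n}) := lambda ^+ (n - #|F| - 1) * sg_weight W F.
rewrite -big_mkcond -(big_imset G (in2W (@arcs_inj n))) /=.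
apply: eq_bigl => F; apply/imsetP/idP => [[f] | /andP [FW rooted]].
  by rewrite unfold_in -andbA => /andP [_ FWr] ->.
have FE := succ_ofK (fun r => in_forest_outdeg r FW).
exists (succ_of F); last by rewrite FE.
rewrite unfold_in -andbA FE FW rooted andbT.
case/andP: rooted => _; rewrite -[F in outdeg F]FE outdeg_arcs.
by case: (succ_of F j).
Qed.

End ForestExpansion.

Theorem proposition3 (C : numClosedFieldType) (n : nat) (W : 'M[C]_n)
  (hn : (1 < n)%N)
  (hloop : forall i, W i i = 0)
  (hpos : forall i j, W i j = 0 \/ 0 < W i j)
  (lambda : C) :
  \adj (lambda%:M + laplacian W) =
  \sum_(k < (n - inforest_dim W).+1) lambda ^+ (n - k - 1) *: Qmat W k.
Proof.
apply/matrixP => i j; rewrite mxE (cofactor_shifted_laplacian hloop hpos) summxE.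
pose N := (n - inforest_dim W).+1.
pose G (F : {set 'I_n * 'I_n}) := lambda ^+ (n - #|F| - 1) * sg_weight W F.
rewrite (partition_big (P := fun F => in_forest W F && rooted_at F i j)
  (fun F => inord #|F| : 'I_N) xpredT) //=.
apply: eq_bigr => k _; rewrite !mxE mulr_sumr [RHS](eq_bigr G).
  apply: eq_bigl => F; rewrite andbAC; case FW: (in_forest W F) => //=.
  by rewrite -val_eqE /= inordK // ltnS card_in_forest.
by move=> F /andP [/andP [_ /eqP <-]].
Qed.
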